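(* Let $n\in\mathbb N$, $W=\{w_1,\dots,w_n\}$, $M=\{m_1,\dots,m_n\}$ disjoint, and let $\mu_{\mathrm{id}}$ be the perfect marriage marrying $w_i$ to $m_i$ for every $i$. Let $D=\{(i,j)\in\{1,\dots,n\}^2: i\ne j\}$. There exist functions $\succ_W:\{0,1\}^{D}\to\mathcal F(W,M)$ and $\succ_M:\{0,1\}^{D}\to\mathcal F(M,W)$ such that for all $\bar x=(x^i_j)_{(i,j)\in D}$ and $\bar y=(y^i_j)_{(i,j)\in D}$ in $\{0,1\}^D$, the following are equivalent: (1) $\mu_{\mathrm{id}}$ is stable with respect to $\succ_W(\bar x)$ and $\succ_M(\bar y)$; (2) $\mathrm{DISJ}(\bar x,\bar y)=1$.
   Context: $\mathcal F(W,M)$ is the set of profiles assigning each woman a total order on $M$; $\mathcal F(M,W)$ analogously for men. A pair $(w,m)$ is blocking for a perfect marriage $\mu$ if $w$ prefers $m$ to her spouse in $\mu$ and $m$ prefers $w$ to his spouse in $\mu$; $\mu$ is stable if it has no blocking pair. $\mathrm{DISJ}(\bar x,\bar y)=1$ if there is no index $(i,j)$ with $x^i_j=y^i_j=1$, and $0$ otherwise. *)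

From mathcomp Require Import all_boot all_fingroup.
Set Implicit Arguments. Unset Strict Implicit. Unset Printing Implicit Defensive.

(* Agents: women w_1..w_n are 'I_n (woman i), men m_1..m_n are 'I_n (man j);
   the two sets are kept disjoint by being separate roles. *)

(* A total (strict) order on a finite set of n agents, represented by a
   permutation listing the agents from most to least preferred:
   o k = the agent ranked at position k (0 = best). *)
Definition order_on (n : nat) := {perm 'I_n}.

Definition prefers n (o : order_on n) (x y : 'I_n) : bool :=
  (o^-1)%g x < (o^-1)%g y.

(* F(W,M): each woman gets a total order on M; F(M,W) analogously. *)
Definition profile n := {ffun 'I_n -> order_on n}.

(* A perfect marriage: bijection from women to men; mu w = husband of w. *)
Definition marriage n := {perm 'I_n}.
Definition mu_id n : marriage n := 1%g.

Definition blocking n (PW PM : profile n) (mu : marriage n) (w m : 'I_n) : bool :=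
  prefers (PW w) m (mu w) && prefers (PM m) w ((mu^-1)%g m).

Definition stable n (PW PM : profile n) (mu : marriage n) : bool :=
  [forall w, forall m, ~~ blocking PW PM mu w m].

Definition D n := {ij : 'I_n * 'I_n | ij.1 != ij.2}.
Definition bitvec n := {ffun D n -> bool}.

Definition DISJ n (x y : bitvec n) : bool := [forall d, ~~ (x d && y d)].

From mathcomp Require Import all_boot all_fingroup.
From mathcomp Require Import zify.
Set Implicit Arguments. Unset Strict Implicit.

(* Woman w_i ranks first the men m_j with x^i_j = 1, then her spouse m_i, then
   all other men; man m_j likewise ranks first the women w_i with y^i_j = 1,
   then his spouse w_j. With these preferences (w_i, m_j) blocks mu_id exactly
   when i <> j and x^i_j = y^i_j = 1, so mu_id is stable iff DISJ(x, y) = 1. *)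

Section RankOrder.
Variables (n : nat) (key : 'I_n -> nat).
Hypothesis key_inj : injective key.

Definition rank (a : 'I_n) : nat := #|[pred b | key b < key a]|.

Lemma rank_lt a : rank a < n.
Proof.
rewrite -[n]card_ord /rank; apply/proper_card/properP; split; first exact/subsetP.
by exists a; [rewrite inE | rewrite inE ltnn].
Qed.

Lemma rank_ltE a b : (rank a < rank b) = (key a < key b).
Proof.
case: (ltnP (key a) (key b)) => lt_ab.
  apply: proper_card; apply/properP; split.
    by apply/subsetP => c; rewrite !inE => /ltn_trans; apply.
  by exists a; rewrite !inE ?ltnn.
apply/negbTE; rewrite -leqNgt; apply: subset_leq_card.
by apply/subsetP => c; rewrite !inE => /leq_trans; apply.
Qed.

Definition rank_ord a : 'I_n := Ordinal (rank_lt a).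

Lemma rank_ord_inj : injective rank_ord.
Proof.
move=> a b [] eq_ab; apply: key_inj.
by case: (ltngtP (key a) (key b)) => // lt_ab; move: lt_ab; rewrite -rank_ltE eq_ab ltnn.
Qed.

(* [perm rank_ord_inj] sends each agent to its position, so its inverse lists the agents by increasing key. *)
Definition key_order : order_on n := ((perm rank_ord_inj)^-1)%g.

Lemma prefers_key_order a b : prefers key_order a b = (key a < key b).
Proof. by rewrite /prefers /key_order invgK !permE rank_ltE. Qed.

End RankOrder.

Section ScoreOrder.
Variables (n : nat) (score : 'I_n -> nat).

(* Ties in [score] are broken by the agents' indices. *)
Definition lex_key (a : 'I_n) : nat := score a * n + a.

Lemma lex_key_inj : injective lex_key.
Proof.
move=> a b /(congr1 (modn^~ n)); rewrite /lex_key !modnMDl !modn_small //.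
exact: val_inj.
Qed.

Lemma lex_key_ltE a b : score a != score b ->
  (lex_key a < lex_key b) = (score a < score b).
Proof.
have := ltn_ord a; have := ltn_ord b; rewrite /lex_key.
case: (ltngtP (score a) (score b)) => // lt_ab lt_b lt_a _; nia.
Qed.

Definition score_order : order_on n := key_order lex_key_inj.

Lemma prefers_score_order a b : score a != score b ->
  prefers score_order a b = (score a < score b).
Proof. by move=> neq_ab; rewrite prefers_key_order lex_key_ltE. Qed.

End ScoreOrder.

Section TierOrder.
Variables (n : nat) (me : 'I_n) (top : pred 'I_n).

Definition tier_order : order_on n :=
  score_order (fun o => if o == me then 1 else if top o then 0 else 2).

Lemma prefers_tier_order o : o != me -> prefers tier_order o me = top o.
Proof. by move=> /negbTE neq_o; rewrite prefers_score_order neq_o eqxx; case: (top o). Qed.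

End TierOrder.

Definition entry n (x : bitvec n) (i j : 'I_n) : bool :=
  if insub (i, j) is Some d then x d else false.

Lemma entry_diag n (x : bitvec n) i : entry x i i = false.
Proof. by rewrite /entry insubF ?eqxx. Qed.

Lemma entry_val n (x : bitvec n) (d : D n) : entry x (val d).1 (val d).2 = x d.
Proof. by rewrite /entry -surjective_pairing valK. Qed.

Definition women_profile n (x : bitvec n) : profile n :=
  [ffun w => tier_order w (entry x w)].

Definition men_profile n (y : bitvec n) : profile n :=
  [ffun m => tier_order m (entry y ^~ m)].

Lemma blocking_mu_id n (x y : bitvec n) w m :
  blocking (women_profile x) (men_profile y) (mu_id n) w m = entry x w m && entry y w m.
Proof.
rewrite /blocking; change (mu_id n) with (1 : {perm 'I_n})%g.
rewrite invg1 !perm1 !ffunE.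
have [<-|neq_wm] := eqVneq m w; first by rewrite entry_diag /prefers ltnn.
by rewrite !prefers_tier_order // eq_sym.
Qed.

Lemma stable_mu_idE n (x y : bitvec n) :
  stable (women_profile x) (men_profile y) (mu_id n) = DISJ x y.
Proof.
apply/forallP/forallP => [disj_wm d | disj_d w].
  by have /forallP/(_ (val d).2) := disj_wm (val d).1; rewrite blocking_mu_id !entry_val.
apply/forallP => m; rewrite blocking_mu_id /entry.
by case: insubP => [d _ _|]; [exact: disj_d | rewrite andbF].
Qed.

Theorem lemma14 (n : nat) :
  exists (SW : bitvec n -> profile n) (SM : bitvec n -> profile n),
    forall x y : bitvec n,
      stable (SW x) (SM y) (mu_id n) <-> DISJ x y.
Proof.
by exists (@women_profile n), (@men_profile n) => x y; rewrite stable_mu_idE.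
Qed.
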